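(* In the setting of the context (with assumptions (A.1)–(A.3)), let $\{(u_k,v_k)\}$, $\{(z_k,w_k)\}$, $\{\gamma_k\}$, $\{\rho_k\}$ be generated by the Projective Method of Multipliers (PMM), and define for $k\ge1$ $$x_k=z_{k-1}+\lambda w_{k-1}+\lambda(Cv_k-d),\quad b_k=d-Cv_k,\quad y_k=x_k-\lambda(w_{k-1}-Mu_k),\quad a_k=-Mu_k.$$ Then for every iteration $k\ge1$ that reaches step 3: (i) $b_k\in\partial h_2(x_k)$ and $\lambda b_k+x_k=z_{k-1}+\lambda w_{k-1}$; (ii) $a_k\in\partial h_1(y_k)$ and $\lambda a_k+y_k=(1-\alpha)z_{k-1}+\alpha x_k-\lambda w_{k-1}$ with $\alpha=1$; (iii) $\gamma_k=\dfrac{\langle z_{k-1}-x_k,b_k-w_{k-1}\rangle+\langle z_{k-1}-y_k,a_k+w_{k-1}\rangle}{\|a_k+b_k\|^2+\|x_k-y_k\|^2}$; (iv) $z_k=z_{k-1}-\rho_k\gamma_k(a_k+b_k)$ and $w_k=w_{k-1}-\rho_k\gamma_k(x_k-y_k)$. That is, the PMM is the instance of the Eckstein–Svaiter projective splitting recursion applied to $\partial h_1,\partial h_2$ with parameters $\lambda_k=\mu_k=\lambda$ and $\alpha_k=1$ (which satisfy $\mu_k/\lambda_k-(\alpha_k/2)^2>0$).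
   Context: Let $f:\mathbb{R}^{m_1}\to(-\infty,\infty]$, $g:\mathbb{R}^{m_2}\to(-\infty,\infty]$ be proper closed convex, $M:\mathbb{R}^{m_1}\to\mathbb{R}^n$, $C:\mathbb{R}^{m_2}\to\mathbb{R}^n$ linear, $d\in\mathbb{R}^n$; consider $\min\{f(u)+g(v):Mu+Cv=d\}$ with Lagrangian $L(u,v,z)=f(u)+g(v)+\langle Mu+Cv-d,z\rangle$. A saddle point is $(u^*,v^*,z^* )$ with $L(u^*,v^*,z^* )$ finite and $\min_{(u,v)}L(u,v,z^* )=L(u^*,v^*,z^* )=\max_zL(u^*,v^*,z)$. Let $h_1(z)=f^*(-M^*z)$, $h_2(z)=g^*(-C^*z)+\langle d,z\rangle$ ($^*$ on functions = Fenchel conjugate, on operators = adjoint). Standing assumptions: (A.1) $L$ has a saddle point; (A.2) $\mathrm{ri}(\mathrm{dom} f^* )\cap\mathrm{range}(M^* )\ne\emptyset$; (A.3) $\mathrm{ri}(\mathrm{dom} g^* )\cap\mathrm{range}(C^* )\ne\emptyset$. PMM: given $(z_0,w_0)\in\mathbb{R}^n\times\mathbb{R}^n$, $\lambda>0$, $\bar\rho\in[0,1)$, for $k=1,2,\dots$: (1) let $v_k$ be a minimizer of $g(v)+\langle z_{k-1}+\lambda w_{k-1},Cv-d\rangle+\frac\lambda2\|Cv-d\|^2$ and $u_k$ a minimizer of $f(u)+\langle z_{k-1}+\lambda(Cv_k-d),Mu\rangle+\frac\lambda2\|Mu\|^2$; (2) if $\|Mu_k+Cv_k-d\|+\|Mu_k-w_{k-1}\|=0$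 stop; otherwise set $\gamma_k=\dfrac{\lambda\|Cv_k-d+w_{k-1}\|^2+\lambda\langle d-Cv_k-Mu_k,w_{k-1}-Mu_k\rangle}{\|Mu_k+Cv_k-d\|^2+\lambda^2\|Mu_k-w_{k-1}\|^2}$; (3) choose $\rho_k\in[1-\bar\rho,1+\bar\rho]$ and set $z_k=z_{k-1}+\rho_k\gamma_k(Mu_k+Cv_k-d)$, $w_k=w_{k-1}-\rho_k\gamma_k\lambda(w_{k-1}-Mu_k)$. *)

(* Euclidean spaces R^m are column vectors 'cV[R]_m,
   linear maps are matrices, adjoints are transposes. *)
From HB Require Import structures.
From mathcomp Require Import all_boot all_order all_algebra.
From mathcomp Require Import all_classical all_reals all_analysis.
Set Implicit Arguments. Unset Strict Implicit. Unset Printing Implicit Defensive.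
Import Order.TTheory GRing.Theory Num.Theory.
Import numFieldTopology.Exports numFieldNormedType.Exports.
Local Open Scope classical_set_scope.
Local Open Scope ring_scope.

Section Defs.
Variable R : realType.

Definition dot (m : nat) (x y : 'cV[R]_m) : R := \sum_(i < m) x i 0 * y i 0.
Definition enorm (m : nat) (x : 'cV[R]_m) : R := Num.sqrt (dot x x).

Definition proper_fun (m : nat) (f : 'cV[R]_m -> \bar R) : Prop :=
  (exists x, f x < +oo)%E /\ (forall x, -oo < f x)%E.

Definition convex_fun (m : nat) (f : 'cV[R]_m -> \bar R) : Prop :=
  forall (x y : 'cV[R]_m) (t : R), 0 < t -> t < 1 ->
    (f (t *: x + (1 - t) *: y)%R <= t%:E * f x + (1 - t)%:E * f y)%E.

(* closed = lower semicontinuous = all sublevel sets closed *)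
Definition closed_fun (m : nat) (f : 'cV[R]_m -> \bar R) : Prop :=
  forall a : R, closed ([set x | (f x <= a%:E)%E] : set 'M[R]_(m, 1)).

Definition conj_fun (m : nat) (f : 'cV[R]_m -> \bar R) (y : 'cV[R]_m) : \bar R :=
  ereal_sup [set ((dot x y)%:E - f x)%E | x in [set: 'cV[R]_m]].

Definition dom_fun (m : nat) (f : 'cV[R]_m -> \bar R) : set 'cV[R]_m :=
  [set x | (f x < +oo)%E].

Definition aff_hull (m : nat) (S : set 'cV[R]_m) : set 'cV[R]_m :=
  [set y | exists (k : nat) (p : 'I_k -> 'cV[R]_m) (t : 'I_k -> R),
     (forall i, S (p i)) /\ \sum_(i < k) t i = 1 /\ y = \sum_(i < k) t i *: p i].

Definition rel_int (m : nat) (S : set 'cV[R]_m) : set 'cV[R]_m :=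
  [set x | S x /\ exists e : R, 0 < e /\
     forall y, aff_hull S y -> enorm (y - x) < e -> S y].

Definition range_mx (m n : nat) (A : 'M[R]_(m, n)) : set 'cV[R]_m :=
  [set A *m z | z in [set: 'cV[R]_n]].

(* subdifferential (empty where h is not finite) *)
Definition subdiff (m : nat) (h : 'cV[R]_m -> \bar R) (x b : 'cV[R]_m) : Prop :=
  h x \is a fin_num /\ forall y, (h x + (dot b (y - x))%:E <= h y)%E.

Definition is_minimizer (T : Type) (phi : T -> \bar R) (x : T) : Prop :=
  forall y, (phi x <= phi y)%E.

Definition lagr (m1 m2 n : nat) (f : 'cV[R]_m1 -> \bar R) (g : 'cV[R]_m2 -> \bar R)
  (M : 'M[R]_(n, m1)) (C : 'M[R]_(n, m2)) (d : 'cV[R]_n)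
  (u : 'cV[R]_m1) (v : 'cV[R]_m2) (z : 'cV[R]_n) : \bar R :=
  (f u + g v + (dot (M *m u + C *m v - d) z)%:E)%E.

Definition saddle_point (m1 m2 n : nat) (f : 'cV[R]_m1 -> \bar R) (g : 'cV[R]_m2 -> \bar R)
  (M : 'M[R]_(n, m1)) (C : 'M[R]_(n, m2)) (d : 'cV[R]_n)
  (us : 'cV[R]_m1) (vs : 'cV[R]_m2) (zs : 'cV[R]_n) : Prop :=
  lagr f g M C d us vs zs \is a fin_num /\
  (forall u v, (lagr f g M C d us vs zs <= lagr f g M C d u v zs)%E) /\
  (forall z, (lagr f g M C d us vs z <= lagr f g M C d us vs zs)%E).

Definition h1 (m1 n : nat) (f : 'cV[R]_m1 -> \bar R) (M : 'M[R]_(n, m1))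
  (z : 'cV[R]_n) : \bar R := conj_fun f (- (M^T *m z)).
Definition h2 (m2 n : nat) (g : 'cV[R]_m2 -> \bar R) (C : 'M[R]_(n, m2)) (d : 'cV[R]_n)
  (z : 'cV[R]_n) : \bar R := (conj_fun g (- (C^T *m z)) + (dot d z)%:E)%E.

End Defs.

(* The two minimization steps of the PMM are augmented-Lagrangian steps.  Comparing
   the minimizer with points on segments towards an arbitrary point and letting the
   step length tend to 0 gives their optimality conditions -C^T x_k \in \partial g(v_k)
   and -M^T y_k \in \partial f(u_k), with no constraint qualification needed.
   Fenchel-Young inversion (b \in \partial F(u) implies u \in \partial F^*(b)) and the
   chain rule for linear maps turn them into b_k \in \partial h_2(x_k) and
   a_k \in \partial h_1(y_k). *)
From HB Require Import structures.
From mathcomp Require Import all_boot all_order all_algebra.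
From mathcomp Require Import all_classical all_reals all_analysis.
From mathcomp Require Import ring lra.
Set Implicit Arguments. Unset Strict Implicit. Unset Printing Implicit Defensive.
Import Order.TTheory GRing.Theory Num.Theory.
Import numFieldTopology.Exports numFieldNormedType.Exports.
Local Open Scope classical_set_scope.
Local Open Scope ring_scope.

Section Dot.
Variables (R : realType) (m : nat).
Implicit Types x y p q c : 'cV[R]_m.

Lemma dotC x y : dot x y = dot y x.
Proof. by apply: eq_bigr => i _; rewrite mulrC. Qed.

Lemma dotDl p x y : dot (x + y) p = dot x p + dot y p.
Proof. by rewrite /dot -big_split; apply: eq_bigr => i _; rewrite mxE mulrDl. Qed.

Lemma dotNl x y : dot (- x) y = - dot x y.
Proof. by rewrite /dot -sumrN; apply: eq_bigr => i _; rewrite mxE mulNr. Qed.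

Lemma dotBl p x y : dot (x - y) p = dot x p - dot y p.
Proof. by rewrite dotDl dotNl. Qed.

Lemma dotBr p x y : dot p (x - y) = dot p x - dot p y.
Proof. by rewrite dotC dotBl !(dotC p). Qed.

Lemma dotxx_ge0 x : 0 <= dot x x.
Proof. by apply: sumr_ge0 => i _; rewrite -expr2 sqr_ge0. Qed.

Lemma sqr_enorm x : enorm x ^+ 2 = dot x x.
Proof. by rewrite sqr_sqrtr // dotxx_ge0. Qed.

Lemma dot_trmx (n : nat) (A : 'M[R]_(m, n)) (p : 'cV[R]_m) (q : 'cV[R]_n) :
  dot (A^T *m p) q = dot p (A *m q).
Proof.
rewrite /dot; under eq_bigr do rewrite !mxE big_distrl.
under [RHS]eq_bigr do rewrite !mxE big_distrr.
rewrite exchange_big; apply: eq_bigr => i _; apply: eq_bigr => j _.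
by rewrite !mxE /= mulrA [p i 0 * _]mulrC.
Qed.

Lemma dot_quad_shift c p q (t lam : R) :
  dot c (p + t *: q) + lam / 2 * dot (p + t *: q) (p + t *: q)
  = dot c p + lam / 2 * dot p p + t * dot (c + lam *: p) q
    + t ^+ 2 * (lam / 2 * dot q q).
Proof.
rewrite /dot !mulr_sumr -!big_split /=.
by apply: eq_bigr => i _; rewrite !mxE; field.
Qed.

End Dot.

Lemma ler_small_slope (R : realFieldType) (a b K : R) :
  (forall t, 0 < t < 1 -> a <= b + t * K) -> a <= b.
Proof.
move=> slope; apply/ler_addgt0Pr => e e_gt0.
have K_ge0 := normr_ge0 K.
have D_gt0 : 0 < e + `|K| + 1 by lra.
set t := e / (e + `|K| + 1).
have t_gt0 : 0 < t by rewrite divr_gt0.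
have t01 : 0 < t < 1 by rewrite t_gt0 ltr_pdivrMr // mul1r; lra.
apply: le_trans (slope t t01) _; rewrite lerD2l.
apply: le_trans (ler_wpM2l (ltW t_gt0) (ler_norm K)) _.
rewrite /t mulrAC ler_pdivrMr // ler_pM2l //; lra.
Qed.

Section Subdifferential.
Variable R : realType.

Lemma subdiff_augmented_minimizer (m n : nat) (F : 'cV[R]_m -> \bar R)
    (A : 'M[R]_(n, m)) (P : 'cV[R]_m -> 'cV[R]_n) (c : 'cV[R]_n) (lam : R)
    (u0 : 'cV[R]_m) :
  (forall u u', P u - P u' = A *m (u - u')) ->
  proper_fun F -> convex_fun F ->
  is_minimizer (fun u => (F u + (dot c (P u) + lam / 2 * enorm (P u) ^+ 2)%:E)%E) u0 ->
  subdiff F u0 (- (A^T *m (c + lam *: P u0))).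
Proof.
move=> P_affine [[u1 Fu1_lt] F_gtNy] F_cvx u0_min.
have [f0 Fu0] : exists f0, F u0 = f0%:E.
  move: (u0_min u1) (F_gtNy u0); case: (F u0) => [f0 _ _| |//]; first by exists f0.
  by case: (F u1) Fu1_lt.
split=> [|u]; first by rewrite Fu0.
case Fu: (F u) => [r| |]; [| exact: leey | by have := F_gtNy u; rewrite Fu].
rewrite Fu0 -EFinD lee_fin dotNl dot_trmx -P_affine.
set g0 := c + lam *: P u0; set q := P u - P u0.
apply: (ler_small_slope (K := lam / 2 * dot q q)) => t /andP[t_gt0 t_lt1].
pose ut := t *: u + (1 - t) *: u0.
have Put : P ut = P u0 + t *: q.
  have ut_u0 : ut - u0 = t *: (u - u0) by apply/matrixP => i j; rewrite !mxE; ring.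
  by rewrite /q P_affine scalemxAr -ut_u0 -P_affine addrC subrK.
have := u0_min ut; have := F_cvx u u0 t t_gt0 t_lt1.
rewrite /= Put Fu Fu0 !sqr_enorm dot_quad_shift -/g0.
have := F_gtNy ut; rewrite -/ut; case: (F ut) => [ft _| |//] //=.
rewrite -!EFinM -!EFinD !lee_fin => cvx_ineq min_ineq.
(* the quadratic terms at u0 cancel, leaving a bound of order t ^+ 2 *)
have : t * (f0 - dot g0 q) <= t * (r + t * (lam / 2 * dot q q)) by nra.
by rewrite ler_pM2l.
Qed.

Lemma subdiff_conj (m : nat) (F : 'cV[R]_m -> \bar R) (u b : 'cV[R]_m) :
  subdiff F u b -> subdiff (conj_fun F) b u.
Proof.
move=> [Fu_fin b_sub]; have [fu Fu] : exists fu, F u = fu%:E.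
  by exists (fine (F u)); rewrite fineK.
have conj_ge b' : ((dot u b' - fu)%:E <= conj_fun F b')%E.
  by apply: ereal_sup_ubound; exists u => //; rewrite Fu.
have conj_b : conj_fun F b = (dot u b - fu)%:E.
  apply/le_anti; rewrite conj_ge andbT; apply: ge_ereal_sup => _ [x _ <-].
  have := b_sub x; rewrite Fu; case: (F x) => [r| |] //=; last by rewrite addeNy leNye.
  by rewrite -EFinB !lee_fin dotC dotBl; lra.
split=> [|b']; first by rewrite conj_b.
by rewrite conj_b -EFinD; apply: le_trans (conj_ge b'); rewrite lee_fin dotBr; lra.
Qed.

Lemma subdiff_comp_mx (m n : nat) (h : 'cV[R]_n -> \bar R) (A : 'M[R]_(n, m))
    (x : 'cV[R]_m) (q : 'cV[R]_n) :
  subdiff h (A *m x) q -> subdiff (fun y => h (A *m y)) x (A^T *m q).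
Proof. by move=> [hx_fin q_sub]; split=> // y; rewrite dot_trmx mulmxBr. Qed.

Lemma subdiff_add_dot (n : nat) (h : 'cV[R]_n -> \bar R) (d x b : 'cV[R]_n) :
  subdiff h x b -> subdiff (fun z => h z + (dot d z)%:E)%E x (b + d).
Proof.
move=> [hx_fin b_sub]; split=> [|y]; first by rewrite fin_numD hx_fin.
rewrite -(fineK hx_fin) -!EFinD; apply: le_trans (leeD2r _ (b_sub y)).
by rewrite -(fineK hx_fin) -!EFinD lee_fin dotDl !dotBr; lra.
Qed.

Lemma subdiff_h1 (m n : nat) (f : 'cV[R]_m -> \bar R) (M : 'M[R]_(n, m))
    (y : 'cV[R]_n) (u : 'cV[R]_m) :
  subdiff f u (- (M^T *m y)) -> subdiff (h1 f M) y (- (M *m u)).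
Proof.
rewrite -mulNmx => /subdiff_conj /subdiff_comp_mx.
rewrite linearN /= trmxK mulNmx.
by have -> : (fun z => conj_fun f (- M^T *m z)) = h1 f M
  by apply: funext => z; rewrite /h1 mulNmx.
Qed.

Lemma subdiff_h2 (m n : nat) (g : 'cV[R]_m -> \bar R) (C : 'M[R]_(n, m))
    (d x : 'cV[R]_n) (v : 'cV[R]_m) :
  subdiff g v (- (C^T *m x)) -> subdiff (h2 g C d) x (d - C *m v).
Proof. by move=> /subdiff_h1 v_sub; rewrite addrC; apply: subdiff_add_dot. Qed.

End Subdifferential.

Section PMMAsProjectiveSplitting.
Variables (R : realType) (n : nat) (z w cv mu d : 'cV[R]_n) (lam : R).

(* (z, w, cv, mu) stand for (z_{k-1}, w_{k-1}, C v_k, M u_k). *)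
Local Notation x := (z + lam *: w + lam *: (cv - d)).
Local Notation b := (d - cv).
Local Notation y := (x - lam *: (w - mu)).
Local Notation a := (- mu).

Lemma pmm_resolvent_h2 : lam *: b + x = z + lam *: w.
Proof. by apply/matrixP => i j; rewrite !mxE; ring. Qed.

Lemma pmm_resolvent_h1 : lam *: a + y = x - lam *: w.
Proof. by apply/matrixP => i j; rewrite !mxE; ring. Qed.

Lemma pmm_y_prox : y = z + lam *: (cv - d) + lam *: mu.
Proof. by apply/matrixP => i j; rewrite !mxE; ring. Qed.

Lemma pmm_gamma :
  (lam * enorm (cv - d + w) ^+ 2 + lam * dot (d - cv - mu) (w - mu))
    / (enorm (mu + cv - d) ^+ 2 + lam ^+ 2 * enorm (mu - w) ^+ 2)
  = (dot (z - x) (b - w) + dot (z - y) (a + w)) / (enorm (a + b) ^+ 2 + enorm (x - y) ^+ 2).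
Proof.
rewrite !sqr_enorm; congr (_ / _);
  by rewrite /dot !mulr_sumr -!big_split /=; apply: eq_bigr => i _; rewrite !mxE; ring.
Qed.

Lemma pmm_z_step (s : R) : z + s *: (mu + cv - d) = z - s *: (a + b).
Proof. by apply/matrixP => i j; rewrite !mxE; ring. Qed.

Lemma pmm_x_sub_y : x - y = lam *: (w - mu).
Proof. by apply/matrixP => i j; rewrite !mxE; ring. Qed.

End PMMAsProjectiveSplitting.

Theorem mainTheorem3 (R : realType) (m1 m2 n : nat)
  (f : 'cV[R]_m1 -> \bar R) (g : 'cV[R]_m2 -> \bar R)
  (M : 'M[R]_(n, m1)) (C : 'M[R]_(n, m2)) (d : 'cV[R]_n)
  (Hf : [/\ proper_fun f, convex_fun f & closed_fun f])
  (Hg : [/\ proper_fun g, convex_fun g & closed_fun g])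
  (A1 : exists us vs zs, saddle_point f g M C d us vs zs)
  (A2 : exists p, rel_int (dom_fun (conj_fun f)) p /\ range_mx M^T p)
  (A3 : exists q, rel_int (dom_fun (conj_fun g)) q /\ range_mx C^T q)
  (lambda rhobar : R) (Hlambda : 0 < lambda) (Hrhobar : 0 <= rhobar < 1)
  (u : nat -> 'cV[R]_m1) (v : nat -> 'cV[R]_m2) (z w : nat -> 'cV[R]_n)
  (gamma rho : nat -> R) (k : nat) (Hk : (1 <= k)%N)
  (* step 1 *)
  (Hv : forall j, (1 <= j <= k)%N ->
     is_minimizer (fun v' => (g v' + (dot (z j.-1 + lambda *: w j.-1) (C *m v' - d)
        + lambda / 2 * enorm (C *m v' - d) ^+ 2)%:E)%E) (v j))
  (Hu : forall j, (1 <= j <= k)%N ->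
     is_minimizer (fun u' => (f u' + (dot (z j.-1 + lambda *: (C *m v j - d)) (M *m u')
        + lambda / 2 * enorm (M *m u') ^+ 2)%:E)%E) (u j))
  (* step 2: iterations 1..k do not stop, i.e. iteration k reaches step 3 *)
  (Hnostop : forall j, (1 <= j <= k)%N ->
     enorm (M *m u j + C *m v j - d) + enorm (M *m u j - w j.-1) != 0)
  (Hgamma : forall j, (1 <= j <= k)%N ->
     gamma j = (lambda * enorm (C *m v j - d + w j.-1) ^+ 2
                + lambda * dot (d - C *m v j - M *m u j) (w j.-1 - M *m u j))
             / (enorm (M *m u j + C *m v j - d) ^+ 2
                + lambda ^+ 2 * enorm (M *m u j - w j.-1) ^+ 2))
  (* step 3 *)
  (Hrho : forall j, (1 <= j <= k)%N -> 1 - rhobar <= rho j <= 1 + rhobar)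
  (Hz : forall j, (1 <= j <= k)%N ->
     z j = z j.-1 + (rho j * gamma j) *: (M *m u j + C *m v j - d))
  (Hw : forall j, (1 <= j <= k)%N ->
     w j = w j.-1 - (rho j * gamma j * lambda) *: (w j.-1 - M *m u j)) :
  let x := z k.-1 + lambda *: w k.-1 + lambda *: (C *m v k - d) in
  let b := d - C *m v k in
  let y := x - lambda *: (w k.-1 - M *m u k) in
  let a := - (M *m u k) in
  let alpha : R := 1 in
  [/\ subdiff (h2 g C d) x b /\ lambda *: b + x = z k.-1 + lambda *: w k.-1,
      subdiff (h1 f M) y a /\
        lambda *: a + y = (1 - alpha) *: z k.-1 + alpha *: x - lambda *: w k.-1,
      gamma k = (dot (z k.-1 - x) (b - w k.-1) + dot (z k.-1 - y) (a + w k.-1))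
                / (enorm (a + b) ^+ 2 + enorm (x - y) ^+ 2),
      z k = z k.-1 - (rho k * gamma k) *: (a + b) /\
        w k = w k.-1 - (rho k * gamma k) *: (x - y)
    & 0 < lambda / lambda - (alpha / 2) ^+ 2].
Proof.
move=> x b y a alpha; rewrite /x /b /y /a /alpha.
have kk : (1 <= k <= k)%N by rewrite Hk leqnn.
case: Hf Hg => [f_proper f_cvx _] [g_proper g_cvx _].
have C_affine v1 v2 : (C *m v1 - d) - (C *m v2 - d) = C *m (v1 - v2).
  by rewrite opprB addrA subrK mulmxBr.
have M_linear (u1 u2 : 'cV[R]_m1) : M *m u1 - M *m u2 = M *m (u1 - u2) by rewrite mulmxBr.
have g_opt := subdiff_augmented_minimizer C_affine g_proper g_cvx (Hv k kk).
have f_opt := subdiff_augmented_minimizer M_linear f_proper f_cvx (Hu k kk).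
rewrite -(pmm_y_prox _ (w k.-1)) in f_opt.
split.
- by split; [exact: subdiff_h2 | exact: pmm_resolvent_h2].
- by rewrite subrr scale0r add0r scale1r; split; [exact: subdiff_h1 | exact: pmm_resolvent_h1].
- by rewrite (Hgamma k kk) (pmm_gamma (z k.-1)).
- by rewrite (Hz k kk) (Hw k kk) pmm_z_step pmm_x_sub_y scalerA.
- by rewrite divff ?gt_eqF //; lra.
Qed.
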